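(* Let $P$ be a weak plane poset with underlying set $[n]$ such that the total order $\ll$ is the natural order of $[n]$. Then $$WLin(P)=\bigsqcup_{f\in Lin(P)}\{g\in PW(n)\mid g\prec f\},$$ and the union on the right-hand side is disjoint.
   Context: A packed word of length $n$ is a surjection $f:[n]\to[k]$ for some $k$, written $f(1)\cdots f(n)$; $PW(n)$ is the set of these. A weak plane poset is a finite set with two partial orders $\leq_1,\leq_2$ such that $x\leq_1 y$ and $x\leq_2 y$ imply $x=y$, and such that $x\preceq y\iff(x\leq_1 y$ or $x\leq_2 y)$ is a total quasi-order; $x\equiv y$ means $x\preceq y$ and $y\preceq x$; $x\ll y\iff(y\leq_1 x$ or $x\leq_2 y)$ is a total order. $Lin(P)$ is the set of surjections $f:[n]\to[k]$ such that $i\leq_1 j\Rightarrow f(i)\leq f(j)$ and $f(i)=f(j)\Rightarrow i\equiv j$ (linear extensions). $WLin(P)$ is the set of surjections $f:[n]\to[k]$ such that $i\leq_1 j\Rightarrow f(i)\leq f(j)$ and ($i\leq_1 j$ and $f(i)=f(j)$) $\Rightarrow i\equiv j$ (weak linear extensions). For $f,g\in PW(n)$, $g\prec f$ means: (1) for all $i,j$, $f(i)\leq f(j)\Rightarrow g(i)\leq g(j)$; (2) for all $i,j$, ($i<j$ and $f(i)>f(j)$) $\Rightarrow g(i)>g(j)$. (In particular $f\prec f$.) *)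

(* Elements of [n] = {1..n} are represented by 'I_n (i.e. 0..n-1,
   shift by one; order is preserved). Values of words are natural numbers in 1..k. *)
From mathcomp Require Import all_boot.
Set Implicit Arguments. Unset Strict Implicit. Unset Printing Implicit Defensive.

Definition word (n : nat) := {ffun 'I_n -> nat}.

Definition packed (n : nat) (f : word n) : Prop :=
  exists k : nat,
    (forall i, 1 <= f i <= k) /\ (forall v, 1 <= v <= k -> exists i, f i = v).

Definition is_partial_order (T : Type) (r : T -> T -> Prop) : Prop :=
  [/\ forall x, r x x,
      forall x y, r x y -> r y x -> x = y &
      forall x y z, r x y -> r y z -> r x z].

Definition is_total_quasi_order (T : Type) (r : T -> T -> Prop) : Prop :=
  [/\ forall x, r x x,
      forall x y z, r x y -> r y z -> r x z &
      forall x y, r x y \/ r y x].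

Definition is_total_order (T : Type) (r : T -> T -> Prop) : Prop :=
  is_partial_order r /\ forall x y, r x y \/ r y x.

Definition pqle (T : Type) (le1 le2 : T -> T -> Prop) (x y : T) : Prop :=
  le1 x y \/ le2 x y.
Definition pequiv (T : Type) (le1 le2 : T -> T -> Prop) (x y : T) : Prop :=
  pqle le1 le2 x y /\ pqle le1 le2 y x.
Definition pll (T : Type) (le1 le2 : T -> T -> Prop) (x y : T) : Prop :=
  le1 y x \/ le2 x y.

Definition weak_plane_poset (T : Type) (le1 le2 : T -> T -> Prop) : Prop :=
  [/\ is_partial_order le1, is_partial_order le2,
      (forall x y, le1 x y -> le2 x y -> x = y),
      is_total_quasi_order (pqle le1 le2) &
      is_total_order (pll le1 le2)].

Definition Lin (n : nat) (le1 le2 : 'I_n -> 'I_n -> Prop) (f : word n) : Prop :=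
  [/\ packed f,
      (forall i j, le1 i j -> f i <= f j) &
      (forall i j, f i = f j -> pequiv le1 le2 i j)].

Definition WLin (n : nat) (le1 le2 : 'I_n -> 'I_n -> Prop) (f : word n) : Prop :=
  [/\ packed f,
      (forall i j, le1 i j -> f i <= f j) &
      (forall i j, le1 i j -> f i = f j -> pequiv le1 le2 i j)].

Definition wprec (n : nat) (g f : word n) : Prop :=
  (forall i j, f i <= f j -> g i <= g j) /\
  (forall i j : 'I_n, i < j -> f i > f j -> g i > g j).

From mathcomp Require Import all_boot zify boolp.
Set Implicit Arguments. Unset Strict Implicit. Unset Printing Implicit Defensive.

(* If f is in Lin(P) and g ≺ f, then f orders the positions lexicographically,
   first by the value of g and then by the quasi-order ⪯: condition (2) of ≺,
   read through ≪ = natural order, forbids f from contradicting ⪯ inside a level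
   of g.  A packed word is determined by the total preorder it induces, so f is
   unique.  Conversely, for g in WLin(P) this lexicographic relation is a total
   preorder, and the packed word realizing it is in Lin(P) and dominates g. *)

Lemma leq_index_sorted (s : seq nat) x y :
  sorted leq s -> x \in s -> y \in s -> (index x s <= index y s) = (x <= y).
Proof.
move=> s_sorted xs ys; have index_leq := sorted_leq_index leq_trans leqnn s_sorted.
apply/idP/idP; first exact: index_leq.
move=> le_xy; rewrite leqNgt; apply/negP => lt_index.
have le_yx : y <= x by apply: index_leq => //; exact: ltnW.
have x_eq_y : x = y by apply/eqP; rewrite eqn_leq le_xy le_yx.
by rewrite x_eq_y ltnn in lt_index.
Qed.

Section Standardize.
Variables (n : nat) (h : word n).

Let s := sort leq (undup (codom h)).

Definition standardize : word n := [ffun i => (index (h i) s).+1].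

Let s_sorted : sorted leq s. Proof. exact: sort_sorted leq_total _. Qed.
Let s_uniq : uniq s. Proof. by rewrite sort_uniq undup_uniq. Qed.
Let mem_s v : (v \in s) = (v \in codom h). Proof. by rewrite mem_sort mem_undup. Qed.

Lemma standardize_packed : packed standardize.
Proof.
exists (size s); split=> [i | v /andP[v_gt0 v_le]].
  by rewrite ffunE /= index_mem mem_s codom_f.
have v_lt : v.-1 < size s by lia.
have /codomP[i hi] : nth 0 s v.-1 \in codom h by rewrite -mem_s mem_nth.
by exists i; rewrite ffunE -hi index_uniq //; lia.
Qed.

Lemma leq_standardize i j : (standardize i <= standardize j) = (h i <= h j).
Proof. by rewrite !ffunE ltnS leq_index_sorted // mem_s codom_f. Qed.

End Standardize.

Lemma card_downset_leq (T : finType) (R : rel T) :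
  transitive R -> total R ->
  forall x y, (#|[set z | R z x]| <= #|[set z | R z y]|) = R x y.
Proof.
move=> R_tr R_tot x y; apply/idP/idP => [|Rxy]; last first.
  by apply: subset_leq_card; apply/subsetP => z; rewrite !inE => Rzx; apply: R_tr Rxy.
apply: contraLR => notRxy; rewrite -ltnNge; apply: proper_card; apply/properP.
have Ryx : R y x by have := R_tot x y; rewrite (negbTE notRxy).
split; first by apply/subsetP => z; rewrite !inE => Rzy; apply: R_tr Ryx.
by exists x; rewrite !inE ?(negbTE notRxy) // -[R x x]orbb R_tot.
Qed.

Lemma exists_packed_total_preorder n (R : 'I_n -> 'I_n -> Prop) :
  (forall i j, R i j \/ R j i) -> (forall i j k, R i j -> R j k -> R i k) ->
  exists f : word n, packed f /\ forall i j, f i <= f j <-> R i j.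
Proof.
move=> R_tot R_tr; pose r i j := `[< R i j >].
have r_tr : transitive r.
  by move=> j i k /asboolP Rij /asboolP Rjk; apply/asboolP; apply: R_tr Rjk.
have r_tot : total r.
  by move=> i j; apply/orP; case: (R_tot i j) => ?; [left | right]; apply/asboolP.
exists (standardize [ffun i => #|[set j | r j i]|]); split=> [|i j].
  exact: standardize_packed.
by rewrite leq_standardize !ffunE card_downset_leq //; apply: iff_sym (rwP (asboolP _)).
Qed.

Lemma packed_leq_of_order n (f1 f2 : word n) :
  packed f1 -> packed f2 -> (forall i j, f2 i <= f2 j -> f1 i <= f1 j) ->
  forall i, f1 i <= f2 i.
Proof.
move=> [k1 [f1_range f1_onto]] [k2 [f2_range _]] f_ord.
suff le_f2 : forall m i, f1 i = m -> m <= f2 i by move=> i; apply: le_f2.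
elim=> [//|m IHm] i f1i.
have [-> | m_gt0] := posnP m; first by have := f2_range i; lia.
have [j f1j] : exists j, f1 j = m by apply: f1_onto; have := f1_range i; lia.
have := IHm j f1j; suff : f2 j < f2 i by lia.
by rewrite ltnNge; apply/negP => /f_ord; lia.
Qed.

Lemma packed_eq_of_order n (f1 f2 : word n) :
  packed f1 -> packed f2 -> (forall i j, f1 i <= f1 j <-> f2 i <= f2 j) -> f1 = f2.
Proof.
move=> f1_packed f2_packed f_ord; apply/ffunP => i; apply/eqP.
rewrite eqn_leq !packed_leq_of_order // => j k /f_ord //.
Qed.

Section WeakPlanePoset.
Variables (n : nat) (le1 le2 : 'I_n -> 'I_n -> Prop).
Hypothesis P_wpp : weak_plane_poset le1 le2.
Hypothesis pll_leq : forall x y, pll le1 le2 x y <-> x <= y.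

Lemma le1_geq x y : le1 x y -> y <= x.
Proof. by move=> le1_xy; apply/pll_leq; left. Qed.

Lemma le2_leq x y : le2 x y -> x <= y.
Proof. by move=> le2_xy; apply/pll_leq; right. Qed.

Lemma pqle_total x y : pqle le1 le2 x y \/ pqle le1 le2 y x.
Proof. by case: P_wpp => _ _ _ [_ _ pq_tot] _; apply: pq_tot. Qed.

Lemma pqle_trans x y z :
  pqle le1 le2 x y -> pqle le1 le2 y z -> pqle le1 le2 x z.
Proof. by case: P_wpp => _ _ _ [_ pq_tr _] _; apply: pq_tr. Qed.

Lemma pqle_le1 (x y : 'I_n) : y < x -> pqle le1 le2 x y -> le1 x y.
Proof. by move=> lt_yx [// | /le2_leq]; lia. Qed.

Definition lex_pqle (g : word n) (i j : 'I_n) : Prop :=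
  g i < g j \/ g i = g j /\ pqle le1 le2 i j.

Lemma lex_pqle_total g i j : lex_pqle g i j \/ lex_pqle g j i.
Proof.
case: (ltngtP (g i) (g j)) => [lt_ij | lt_ji | eq_ij]; [by left; left | by right; left |].
by case: (pqle_total i j) => ?; [left | right]; right.
Qed.

Lemma lex_pqle_trans g i j k :
  lex_pqle g i j -> lex_pqle g j k -> lex_pqle g i k.
Proof.
move=> [lt_ij | [eq_ij pq_ij]] [lt_jk | [eq_jk pq_jk]]; try (left; lia).
by right; split; [lia | apply: pqle_trans pq_jk].
Qed.

Lemma prec_leq_same_level (g f : word n) (i j : 'I_n) :
  wprec g f -> i <= j -> g i = g j -> f i <= f j.
Proof.
move=> [_ prec_desc]; rewrite leq_eqVlt => /orP[/eqP/val_inj -> // | lt_ij] g_ij.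
by rewrite leqNgt; apply/negP => /(prec_desc _ _ lt_ij); lia.
Qed.

Lemma Lin_prec_order (g f : word n) :
  Lin le1 le2 f -> wprec g f -> forall i j, f i <= f j <-> lex_pqle g i j.
Proof.
move=> [_ f_mono f_eq] prec_gf i j; have [prec_le _] := prec_gf; split.
- move=> le_fij; have := prec_le _ _ le_fij.
  rewrite leq_eqVlt => /orP[/eqP g_ij | ]; last by left.
  right; split=> //; move: le_fij; rewrite leq_eqVlt => /orP[/eqP/f_eq[] // | lt_fij].
  case: (leqP i j) => [le_ij | lt_ji].
    have [le1_ji | le2_ij] := proj2 (pll_leq i j) le_ij; last by right.
    by have := f_mono _ _ le1_ji; lia.
  by have := prec_leq_same_level prec_gf (ltnW lt_ji) (esym g_ij); lia.
- move=> [lt_gij | [g_ij [le1_ij | le2_ij]]].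
  + by rewrite leqNgt; apply/negP => /ltnW /prec_le; lia.
  + exact: f_mono.
  + exact: prec_leq_same_level prec_gf (le2_leq le2_ij) g_ij.
Qed.

Lemma Lin_prec_unique (g f1 f2 : word n) :
  Lin le1 le2 f1 -> Lin le1 le2 f2 -> wprec g f1 -> wprec g f2 -> f1 = f2.
Proof.
move=> f1_Lin f2_Lin prec1 prec2; apply: packed_eq_of_order.
- by case: f1_Lin.
- by case: f2_Lin.
- by move=> i j; rewrite (Lin_prec_order f1_Lin prec1) (Lin_prec_order f2_Lin prec2).
Qed.

Lemma WLin_of_prec_Lin (g f : word n) :
  packed g -> Lin le1 le2 f -> wprec g f -> WLin le1 le2 g.
Proof.
move=> g_packed [_ f_mono f_eq] prec_gf; split=> // [i j /f_mono | i j le1_ij g_ij].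
  exact: (proj1 prec_gf).
apply: f_eq; apply/eqP; rewrite eqn_leq f_mono //.
exact: prec_leq_same_level prec_gf (le1_geq le1_ij) (esym g_ij).
Qed.

Lemma exists_Lin_prec_of_WLin (g : word n) :
  WLin le1 le2 g -> exists f : word n, Lin le1 le2 f /\ wprec g f.
Proof.
move=> [_ g_mono g_eq].
have [f [f_packed f_ord]] :=
  exists_packed_total_preorder (lex_pqle_total g) (@lex_pqle_trans g).
exists f; split; [split=> // [i j le1_ij | i j f_ij] | split=> [i j /f_ord | i j lt_ij lt_fji]].
- apply/f_ord; have := g_mono _ _ le1_ij.
  rewrite leq_eqVlt => /orP[/eqP g_ij | ]; last by left.
  by right; split=> //; left.
- have [] : lex_pqle g i j /\ lex_pqle g j i by split; apply/f_ord; rewrite f_ij.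
  by move=> [lt_ij | [g_ij pq_ij]] [lt_ji | [g_ji pq_ji]]; try lia; split.
- by move=> [/ltnW | [-> _]].
- rewrite ltnNge; apply/negP => le_gij; suff : f i <= f j by lia.
  apply/f_ord; move: le_gij; rewrite leq_eqVlt => /orP[/eqP g_ij | ]; last by left.
  right; split=> //; case: (pqle_total i j) => // pq_ji.
  by have [] := g_eq _ _ (pqle_le1 lt_ij pq_ji) (esym g_ij).
Qed.

End WeakPlanePoset.

Theorem mainTheorem6 (n : nat) (le1 le2 : 'I_n -> 'I_n -> Prop) :
  weak_plane_poset le1 le2 ->
  (forall x y : 'I_n, pll le1 le2 x y <-> (x <= y)%N) ->
  (forall g : word n,
      WLin le1 le2 g <-> (packed g /\ exists f : word n, Lin le1 le2 f /\ wprec g f)) /\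
  (forall (g f1 f2 : word n),
      Lin le1 le2 f1 -> Lin le1 le2 f2 -> wprec g f1 -> wprec g f2 -> f1 = f2).
Proof.
move=> P_wpp pll_leq; split=> [g | g f1 f2]; last exact: Lin_prec_unique.
split=> [g_WLin | [g_packed [f [f_Lin prec_gf]]]].
  by split; [case: g_WLin | apply: exists_Lin_prec_of_WLin].
exact: WLin_of_prec_Lin g_packed f_Lin prec_gf.
Qed.
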